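(* Let $G=(V,E)$ be a planar biconnected graph with $\deg(v)\ge 3$ for every $v\in V$. Then the SPQR-tree of $G$ contains at least one Q-node that is adjacent to a P-node or an R-node.
   Context: The SPQR-tree (with Q-nodes) of a biconnected graph $G$ is the standard decomposition tree of $G$ into its triconnected components. Each node $\mu$ has a skeleton graph: for a Q-node it consists of two parallel edges, one of which is an edge of $G$; for an S-node it is a simple cycle of length at least three; for a P-node it is a bundle of at least three parallel edges between two vertices; for an R-node it is a simple triconnected graph. The leaves are exactly the Q-nodes, one for each edge of $G$; no two S-nodes and no two P-nodes are adjacent in the tree. *)

From HB Require Import structures.
From mathcomp Require Import all_boot.
From mathcomp Require Import fingroup perm.

Set Implicit Arguments.
Unset Strict Implicit.
Unset Printing Implicit Defensive.

Definition simple_graph (T : finType) (e : rel T) :=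
  symmetric e /\ irreflexive e.

Definition induced_connected (T : finType) (e : rel T) (A : {set T}) :=
  forall x y, x \in A -> y \in A ->
    connect [rel a b | [&& a \in A, b \in A & e a b]] x y.

Definition biconnected (T : finType) (e : rel T) :=
  induced_connected e [set: T] /\ forall v : T, induced_connected e [set~ v].

Definition degree (T : finType) (e : rel T) (x : T) := #|[set y | e x y]|.

Definition edges (T : finType) (e : rel T) : {set {set T}} :=
  [set f : {set T} | [exists x, exists y, e x y && (f == [set x; y])]].

Definition darts (T : finType) (e : rel T) : {set T * T} :=
  [set p | e p.1 p.2].

Definition rotation_system (T : finType) (e : rel T) (rot : {perm T * T}) :=
  [/\ forall p, p \in darts e -> rot p \in darts e /\ (rot p).1 = p.1,
      forall p, p \notin darts e -> rot p = p &
      forall p q, p \in darts e -> q \in darts e -> p.1 = q.1 ->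
        fconnect rot p q].

Definition face_map (T : finType) (rot : {perm T * T}) (p : T * T) : T * T :=
  rot (p.2, p.1).

Definition isolated (T : finType) (e : rel T) : {set T} :=
  [set x | [forall y, ~~ e x y]].

(* planar: some rotation system has Euler characteristic 2 on every
   connected component, i.e. V - E + F = 2 * (#components), where an
   isolated vertex counts as having one face. *)
Definition planar (T : finType) (e : rel T) :=
  exists rot : {perm T * T}, rotation_system e rot /\
    #|T| + n_comp (frel (face_map rot)) (mem (darts e)) + #|isolated e|
      = 2 * n_comp e (mem [set: T]) + #|edges e|.

Inductive spqr_kind := SK | PK | QK | RK.

Definition kind_nat k := match k with SK => 0 | PK => 1 | QK => 2 | RK => 3 end.
Definition nat_kind n := match n with 0 => SK | 1 => PK | 2 => QK | _ => RK end.
Lemma kind_natK : cancel kind_nat nat_kind. Proof. by case. Qed.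
HB.instance Definition _ := Equality.copy spqr_kind (can_type kind_natK).

(* A candidate SPQR-tree is given by
   - a finite type N of tree nodes with adjacency relation tadj,
   - the kind of each node,
   - for each tree edge {mu, nu} the two poles (vertices of G) of the pair of
     virtual edges (one in the skeleton of mu, one in that of nu),
   - for each Q-node its real edge of G.
   The skeleton of mu is the multigraph whose vertices are vertices of G and
   whose edges are: one virtual edge for every tree neighbour nu of mu (with
   endpoints poles mu nu), plus the real edge qedge mu if mu is a Q-node. *)
Section SPQR.
Variables (T : finType) (e : rel T).
Variables (N : finType) (tadj : rel N) (kind : N -> spqr_kind)
          (poles : N -> N -> {set T}) (qedge : N -> {set T}).

Definition nbrs (mu : N) : {set N} := [set nu | tadj mu nu].

Definition skel_vertices (mu : N) : {set T} :=
  (\bigcup_(nu in nbrs mu) poles mu nu) :|: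
  (if kind mu == QK then qedge mu else set0).

Definition skel_rel (mu : N) : rel T :=
  fun u v => (u != v) &&
    ((kind mu == QK) && (qedge mu == [set u; v]) ||
     [exists nu, tadj mu nu && (poles mu nu == [set u; v])]).

(* number of skeleton edges of mu incident to v (S-nodes have no real edge) *)
Definition skel_deg (mu : N) (v : T) := #|[set nu in nbrs mu | v \in poles mu nu]|.

(* skeleton of an S-node: a simple cycle of length >= 3 *)
Definition S_skeleton (mu : N) :=
  [/\ 3 <= #|nbrs mu|,
      forall v, v \in skel_vertices mu -> skel_deg mu v = 2 &
      induced_connected (skel_rel mu) (skel_vertices mu)].

Definition P_skeleton (mu : N) :=
  3 <= #|nbrs mu| /\
  exists u v : T, u != v /\ forall nu, nu \in nbrs mu -> poles mu nu = [set u; v].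

Definition Q_skeleton (mu : N) :=
  #|nbrs mu| = 1 /\ qedge mu \in edges e /\
  forall nu, nu \in nbrs mu -> poles mu nu = qedge mu.

(* skeleton of an R-node: a simple triconnected graph *)
Definition R_skeleton (mu : N) :=
  [/\ forall nu1 nu2, nu1 \in nbrs mu -> nu2 \in nbrs mu ->
        poles mu nu1 = poles mu nu2 -> nu1 = nu2,
      4 <= #|skel_vertices mu| &
      forall a b : T,
        induced_connected (skel_rel mu) (skel_vertices mu :\ a :\ b)].

Definition is_tree :=
  [/\ symmetric tadj, irreflexive tadj, 0 < #|N|,
      forall x y, connect tadj x y &
      #|[set p : N * N | tadj p.1 p.2]| = 2 * (#|N| - 1)].

Definition is_spqr_tree :=
  [/\ is_tree,
      (forall mu nu, tadj mu nu ->
         poles mu nu = poles nu mu /\ #|poles mu nu| = 2),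
      (forall mu, match kind mu with
                  | SK => S_skeleton mu
                  | PK => P_skeleton mu
                  | QK => Q_skeleton mu
                  | RK => R_skeleton mu
                  end),
      (forall mu, (kind mu == QK) = (#|nbrs mu| == 1)) &
      [/\ forall mu1 mu2, kind mu1 = QK -> kind mu2 = QK ->
            qedge mu1 = qedge mu2 -> mu1 = mu2,
          forall f, f \in edges e -> exists2 mu, kind mu = QK & qedge mu = f,
          (forall mu nu, tadj mu nu -> ~ (kind mu = SK /\ kind nu = SK)),
          (forall mu nu, tadj mu nu -> ~ (kind mu = PK /\ kind nu = PK)) &
          (* gluing the skeletons along the virtual edge pairs gives G:
             adjacent skeletons share exactly the poles of their virtual
             edges, and the skeletons containing a given vertex of G form a
             subtree *)
          ((forall mu nu, tadj mu nu ->
                skel_vertices mu :&: skel_vertices nu = poles mu nu) /\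
           (forall v : T,
                induced_connected tadj [set mu | v \in skel_vertices mu]))]].

End SPQR.

From HB Require Import structures.
From mathcomp Require Import all_boot.
From mathcomp Require Import fingroup perm.
From mathcomp Require Import zify.

Set Implicit Arguments.
Unset Strict Implicit.
Unset Printing Implicit Defensive.

(* Q-nodes are the leaves of the SPQR-tree, and two adjacent Q-nodes would make
   up the whole tree and leave every vertex with degree at most 2; so the
   non-Q nodes form a subtree, and double counting the arcs of the tree gives
   a non-Q node x with at most one non-Q neighbour.  For a vertex v, the nodes
   whose skeletons contain v form a subtree holding the Q-node of every edge
   at v, hence at least three Q-nodes.  If x were an S-node, a vertex v of its
   skeleton cycle off the virtual edge towards the non-Q neighbour would have
   both of its skeleton edges leading to Q-leaves, confining the subtree of v
   to x and two Q-nodes.  So x is a P- or R-node; these have at least two tree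
   neighbours, hence a Q-neighbour. *)

Lemma sum_card_nbrs (N : finType) (r : rel N) :
  \sum_x #|[set y | r x y]| = #|[set p : N * N | r p.1 p.2]|.
Proof.
under eq_bigr do rewrite -sum1dep_card.
by rewrite pair_big_dep sum1dep_card.
Qed.

Lemma exists_inner_leaf (N : finType) (r : rel N) (leaf : pred N) :
  symmetric r -> #|[set p : N * N | r p.1 p.2]| = 2 * (#|N| - 1) ->
  (forall x, leaf x -> #|[set y | r x y]| = 1) ->
  (forall x y, r x y -> leaf x -> ~~ leaf y) ->
  (exists x, ~~ leaf x) ->
  exists2 x, ~~ leaf x & #|[set y | r x y & ~~ leaf y]| <= 1.
Proof.
move=> rsym card_arcs leaf1 leaf_nbr [x0 inner_x0].
pose k := #|[set x | leaf x]|; pose m := #|[set x | ~~ leaf x]|.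
have card_N : #|N| = k + m.
  by rewrite -sum1_card (bigID leaf) /= !sum1dep_card.
have m_gt0 : 0 < m by apply/card_gt0P; exists x0; rewrite inE.
pose c x := #|[set y | r x y & ~~ leaf y]|.
have inner_deg x : #|[set y | r x y]| = #|[set y | r x y & leaf y]| + c x.
  by rewrite /c -!sum1dep_card (bigID leaf).
have leaf_arcs : \sum_(x | ~~ leaf x) #|[set y | r x y & leaf y]| = k.
  under eq_bigr do rewrite -sum1dep_card.
  rewrite (exchange_big_dep leaf) /=; last by move=> x y _ /andP[].
  rewrite /k -sum1dep_card; apply: eq_bigr => y leaf_y.
  rewrite sum1dep_card -(leaf1 y leaf_y); apply: eq_card => x.
  rewrite !inE leaf_y andbT rsym.
  by apply/andP/idP => [[]|yx] //; split=> //; apply: leaf_nbr yx leaf_y.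
have sum_c : k + (k + \sum_(x | ~~ leaf x) c x) = 2 * (k + m - 1).
  rewrite -card_N -card_arcs -sum_card_nbrs [RHS](bigID leaf) /= (eq_bigr _ leaf1).
  rewrite sum1dep_card; congr (_ + _).
  rewrite -{1}leaf_arcs -big_split /=.
  by apply: eq_bigr => x _; rewrite inner_deg.
case: (pickP [pred x | ~~ leaf x && (c x <= 1)]) => [x /andP[] | c_ge2].
  by exists x.
have : \sum_(x | ~~ leaf x) 2 <= \sum_(x | ~~ leaf x) c x.
  by apply: leq_sum => x inner_x; move/negbT: (c_ge2 x); rewrite /= inner_x -ltnNge.
rewrite sum_nat_cond_const; lia.
Qed.

Lemma induced_connected_sub (N : finType) (r : rel N) (A B : {set N}) x0 :
  symmetric r -> induced_connected r A -> x0 \in A -> x0 \in B ->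
  {in A &, forall a b, r a b -> a \in B -> b \in B} -> A \subset B.
Proof.
move=> rsym A_conn x0A x0B B_closed; apply/subsetP => y yA.
have B_closedA : closed [rel a b | [&& a \in A, b \in A & r a b]] (mem B).
  move=> a b /and3P[aA bA ab] /=; apply/idP/idP; first exact: B_closed ab.
  by apply: B_closed; rewrite // rsym.
by rewrite -(closed_connect B_closedA (A_conn x0 y x0A yA)).
Qed.

Lemma exists_nbr_in (N : finType) (r : rel N) (P : pred N) x :
  1 < #|[set y | r x y]| -> #|[set y | r x y & ~~ P y]| <= 1 ->
  exists2 y, r x y & P y.
Proof.
move=> nbrs_gt1 nbrsN_le1.
case: (pickP [pred y | r x y & P y]) => [y /andP[] | noP]; first by exists y.
suff nbrsN : [set y | r x y & ~~ P y] = [set y | r x y].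
  by rewrite -nbrsN ltnNge nbrsN_le1 in nbrs_gt1.
by apply/setP => y; rewrite !inE; have := noP y; rewrite /=; case: (r x y) => //= ->.
Qed.

Section SPQRTree.

Variables (T : finType) (e : rel T).
Variables (N : finType) (tadj : rel N) (kind : N -> spqr_kind)
          (poles : N -> N -> {set T}) (qedge : N -> {set T}).

Hypothesis e_simple : simple_graph e.
Hypothesis spqr : is_spqr_tree e tadj kind poles qedge.
Hypothesis degree_ge3 : forall v, 3 <= degree e v.

Local Notation skel := (skel_vertices tadj kind poles qedge).
Local Notation nbrs := (nbrs tadj).
Local Notation isQ mu := (kind mu == QK).

Lemma tadj_sym : symmetric tadj.
Proof. by case: spqr => -[]. Qed.

Lemma card_poles mu nu : tadj mu nu -> #|poles mu nu| = 2.
Proof. by case: spqr => _ pol _ _ _ /pol[]. Qed.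

Lemma Qnode_nbrs1 q : isQ q -> #|nbrs q| = 1.
Proof. by case: spqr => _ _ _ leaf _ Qq; apply/eqP; rewrite -leaf. Qed.

Lemma Qnode_nbr_uniq q a b : kind q = QK -> tadj q a -> tadj q b -> a = b.
Proof.
move=> /eqP/Qnode_nbrs1 nbrs1 qa qb.
have /card_le1_eqP : #|nbrs q| <= 1 by rewrite nbrs1.
by apply; rewrite inE.
Qed.

Lemma poles_sub_skel mu nu : tadj mu nu -> poles mu nu \subset skel mu.
Proof.
move=> mu_nu; apply/subsetP => v v_pole; rewrite inE; apply/orP; left.
by apply/bigcupP; exists nu; rewrite ?inE.
Qed.

Lemma degree_le_Qnodes v : degree e v <= #|[set q | isQ q & v \in skel q]|.
Proof.
have [_ e_irr] := e_simple.
have [[_ _ N_gt0 _ _] _ _ _ [_ Qnode_of_edge _ _ _]] := spqr.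
have [mu0 _] := card_gt0P N_gt0.
have edge_vy y : e v y -> [set v; y] \in edges e.
  move=> vy; rewrite inE; apply/existsP; exists v; apply/existsP; exists y.
  by rewrite vy eqxx.
pose f y := odflt mu0 [pick q | isQ q & qedge q == [set v; y]].
have fP y : e v y -> kind (f y) = QK /\ qedge (f y) = [set v; y].
  move=> /edge_vy /Qnode_of_edge[q kq qq]; rewrite /f.
  case: pickP => [q' /andP[/eqP -> /eqP ->] // | /(_ q)].
  by rewrite kq qq !eqxx.
rewrite /degree -(card_in_imset (f := f)) => [|y1 y2]; last first.
  rewrite !inE => vy1 vy2 f12; have [_ q1] := fP y1 vy1; have [_ q2] := fP y2 vy2.
  have : y1 \in [set v; y2] by rewrite -q2 -f12 q1 set22.
  by rewrite !inE => /orP[/eqP y1v | /eqP //]; move: vy1; rewrite -y1v e_irr.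
apply: subset_leq_card; apply/subsetP => q /imsetP[y]; rewrite inE => vy ->.
have [kq qq] := fP y vy.
by rewrite inE kq eqxx /= /skel_vertices kq /= qq !inE eqxx orbT.
Qed.

Lemma Qnodes_closed_gt2 v (B : {set N}) x0 :
  x0 \in B -> v \in skel x0 ->
  (forall b a, b \in B -> v \in skel a -> tadj b a -> a \in B) ->
  2 < #|[set q in B | isQ q]|.
Proof.
have [[tsym _ _ _ _] _ _ _ [_ _ _ _ [_ skel_subtree]]] := spqr.
move=> x0B vx0 B_closed.
have skelB : [set mu | v \in skel mu] \subset B.
  apply: (induced_connected_sub tsym (skel_subtree v) _ x0B); first by rewrite inE.
  by move=> b a _; rewrite inE => va ba /B_closed; apply.
apply: leq_trans (degree_ge3 v) (leq_trans (degree_le_Qnodes v) _).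
apply/subset_leq_card/subsetP => q; rewrite inE => /andP[kq vq].
by rewrite inE kq andbT; apply: (subsetP skelB); rewrite inE.
Qed.

Lemma no_adjacent_Qnodes mu nu : tadj mu nu -> isQ mu -> ~~ isQ nu.
Proof.
move=> mu_nu /eqP kmu; apply/negP => /eqP knu.
have [_ _ skel_kind _ _] := spqr.
have := skel_kind mu; rewrite kmu => -[_ [+ _]].
rewrite inE => /existsP[v /existsP[w /andP[_ /eqP qmu]]].
suff : 2 < #|[set q in [set mu; nu] | isQ q]|.
  rewrite ltnNge => /negP; apply; apply: (@leq_trans #|[set mu; nu]|).
    by apply/subset_leq_card/subsetP => q; rewrite inE => /andP[].
  by rewrite cards2; case: (_ != _).
apply: (@Qnodes_closed_gt2 v _ mu); first by rewrite set21.
  by rewrite /skel_vertices kmu eqxx qmu !inE eqxx orbT.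
move=> b a; rewrite !inE => /orP[/eqP-> | /eqP->] _ ba.
  by rewrite (Qnode_nbr_uniq kmu ba mu_nu) eqxx orbT.
by rewrite (Qnode_nbr_uniq knu ba (_ : tadj nu mu)) ?eqxx // tadj_sym.
Qed.

Lemma S_node_vertex_off_poles x nu0 :
  kind x = SK -> tadj x nu0 -> exists2 v, v \in skel x & v \notin poles x nu0.
Proof.
move=> kx x_nu0; have [_ _ skel_kind _ _] := spqr.
have := skel_kind x; rewrite kx => -[nbrs_ge3 skel_deg2 _].
apply/exists_inP; rewrite -negb_forall_in; apply/negP => /forall_inP skel_sub.
have poles_eq nu : tadj x nu -> poles x nu = poles x nu0.
  move=> x_nu; apply/eqP; rewrite eqEcard !card_poles // leqnn andbT.
  by apply/subsetP => w /(subsetP (poles_sub_skel x_nu)) /skel_sub.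
have /card_gt0P[a a_pole] : 0 < #|poles x nu0| by rewrite card_poles.
have := skel_deg2 a (subsetP (poles_sub_skel x_nu0) a a_pole); rewrite /skel_deg.
rewrite (eq_card (B := nbrs x)) => [nbrs2|nu]; first by rewrite nbrs2 in nbrs_ge3.
by rewrite !inE; case x_nu: (tadj x nu); rewrite //= (poles_eq _ x_nu).
Qed.

Lemma exists_non_Qnode : exists mu, ~~ isQ mu.
Proof.
have [[_ _ /card_gt0P[mu _] _ _] _ _ _ _] := spqr.
have [Qmu | ] := boolP (isQ mu); last by exists mu.
have /card_gt0P[nu] : 0 < #|nbrs mu| by rewrite Qnode_nbrs1.
by rewrite inE => mu_nu; exists nu; apply: no_adjacent_Qnodes mu_nu Qmu.
Qed.

Lemma S_node_inner_nbrs_gt1 x :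
  kind x = SK -> 1 < #|[set nu | tadj x nu & ~~ isQ nu]|.
Proof.
move=> kx; rewrite ltnNge; apply/negP => /card_le1_eqP inner_uniq.
have [_ _ skel_kind _ [_ _ _ _ [glue _]]] := spqr.
have := skel_kind x; rewrite kx => -[nbrs_ge3 skel_deg2 _].
have [nu0 x_nu0 inner_eq] : exists2 nu0, tadj x nu0 &
    forall nu, tadj x nu -> ~~ isQ nu -> nu = nu0.
  case: (pickP [pred nu | tadj x nu & ~~ isQ nu]) => [nu0 /andP[x_nu0 inner0]|no_inner].
    exists nu0 => // nu x_nu inner.
    by apply: inner_uniq; rewrite inE ?x_nu ?x_nu0 ?inner ?inner0.
  have /card_gt0P[nu0] : 0 < #|nbrs x| by apply: leq_trans nbrs_ge3.
  rewrite inE => x_nu0; exists nu0 => // nu x_nu inner.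
  by move: (no_inner nu); rewrite /= x_nu inner.
have [v vx v_off] := S_node_vertex_off_poles kx x_nu0.
have v_Q nu : tadj x nu -> v \in poles x nu -> kind nu = QK.
  move=> x_nu v_pole; apply/eqP; apply: contraNT v_off => inner.
  by rewrite -(inner_eq nu x_nu inner).
pose B := x |: [set nu | tadj x nu & v \in poles x nu].
suff : 2 < #|[set q in B | isQ q]|.
  rewrite ltnNge => /negP; apply; rewrite -(skel_deg2 v vx) /skel_deg.
  apply/subset_leq_card/subsetP => q; rewrite !inE => /andP[/orP[/eqP-> | //]].
  by rewrite kx.
apply: (Qnodes_closed_gt2 (setU11 _ _) vx) => b a /setU1P[-> va x_a | ].
  have v_pole : v \in poles x a by rewrite -(glue x a x_a) inE vx va.
  by rewrite !inE x_a v_pole orbT.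
rewrite inE => /andP[x_b v_b] _ b_a.
by rewrite (Qnode_nbr_uniq (v_Q b x_b v_b) b_a (_ : tadj b x)) ?setU11 // tadj_sym.
Qed.

Lemma PR_node_nbrs_gt1 x : kind x = PK \/ kind x = RK -> 1 < #|nbrs x|.
Proof.
have [_ _ skel_kind _ _] := spqr.
case=> kx; have := skel_kind x; rewrite kx.
  by case=> nbrs_ge3 _; apply: leq_trans nbrs_ge3.
case=> _ skel_ge4 _; rewrite ltnNge; apply/negP => /card_le1_eqP nbr_uniq.
suff : #|skel x| <= 2 by move/(leq_trans skel_ge4).
rewrite /skel_vertices kx /= setU0.
have [-> | [nu0 x_nu0]] := set_0Vmem (nbrs x); first by rewrite big_set0 cards0.
rewrite -(card_poles (_ : tadj x nu0)) -?inE //.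
apply/subset_leq_card/bigcupsP => nu x_nu.
by rewrite (nbr_uniq _ _ x_nu x_nu0).
Qed.

End SPQRTree.

Theorem mainTheorem2 (T : finType) (e : rel T)
  (N : finType) (tadj : rel N) (kind : N -> spqr_kind)
  (poles : N -> N -> {set T}) (qedge : N -> {set T}) :
  simple_graph e -> planar e -> biconnected e ->
  (forall v : T, 3 <= degree e v) ->
  is_spqr_tree e tadj kind poles qedge ->
  exists mu : N, kind mu = QK /\
    exists2 nu : N, tadj mu nu & (kind nu = PK \/ kind nu = RK).
Proof.
move=> e_simple _ _ degree_ge3 spqr.
have [[tsym _ _ _ card_arcs] _ _ _ _] := spqr.
have [x inner_x inner_le1] := exists_inner_leaf tsym card_arcs
  (Qnode_nbrs1 spqr) (no_adjacent_Qnodes e_simple spqr degree_ge3)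
  (exists_non_Qnode e_simple spqr degree_ge3).
have PR_x : kind x = PK \/ kind x = RK.
  case kx: (kind x) inner_x => [|||] //; [exfalso | by left | by right].
  have := S_node_inner_nbrs_gt1 e_simple spqr degree_ge3 kx.
  by rewrite ltnNge inner_le1.
have [q x_q /eqP kq] := exists_nbr_in (PR_node_nbrs_gt1 spqr PR_x) inner_le1.
by exists q; split=> //; exists x; rewrite // tsym.
Qed.
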